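(* Let $\theta^*\in\mathbb{R}^n$, let $\phi_1,\dots,\phi_N\in\mathbb{R}^n$ with $[\phi_1,\dots,\phi_N]$ of rank $n$, and $y_k:=\phi_k^T\theta^*$. For any $\beta>0$, $\gamma>0$ and $\mu\ge0$, with $$B(\theta,\mu):=\sum_{k=1}^N\frac{\phi_k}{1+\mu\phi_k^T\phi_k}\big(\phi_k^T\theta-y_k\big),$$ the point $(\theta^*,\theta^* )$ is uniformly globally asymptotically stable for the system in $(\theta,\vartheta)\in\mathbb{R}^{2n}$ $$\dot\theta=-\beta(\theta-\vartheta),\qquad\dot\vartheta=-\gamma B(\theta,\mu).$$
   Context: In the paper $\phi_k=\phi(t_k)$, $y_k=y^*(t_k)$ are recorded data samples. UGAS: uniformly globally stable (there is class-$\mathcal{K}_\infty$ $\kappa$ with $|x(t)-x^*|\le\kappa(|x_\circ-x^*|)$ for $t\ge t_\circ$) and uniformly globally attractive (for each $r,\sigma>0$ there is $T'>0$ with $|x_\circ-x^*|\le r\Rightarrow |x(t)-x^*|\le\sigma$ for $t\ge t_\circ+T'$). *)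

From HB Require Import structures.
From mathcomp Require Import all_boot all_order all_algebra.
From mathcomp Require Import all_classical all_reals all_analysis.
Set Implicit Arguments. Unset Strict Implicit. Unset Printing Implicit Defensive.
Import Order.TTheory GRing.Theory Num.Theory.
Import numFieldNormedType.Exports.
Local Open Scope classical_set_scope.
Local Open Scope ring_scope.

Section Defs.
Variables (R : realType) (n N : nat).

Definition dotv (u v : 'I_n -> R) : R := \sum_(i < n) u i * v i.

Definition data_matrix (phi : 'I_N -> 'I_n -> R) : 'M[R]_(n, N) :=
  \matrix_(i < n, k < N) phi k i.

Definition yk (phi : 'I_N -> 'I_n -> R) (thstar : 'I_n -> R) (k : 'I_N) : R :=
  dotv (phi k) thstar.

Definition Bvec (phi : 'I_N -> 'I_n -> R) (thstar : 'I_n -> R) (mu : R)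
  (theta : 'I_n -> R) : 'I_n -> R :=
  fun i => \sum_(k < N)
    phi k i / (1 + mu * dotv (phi k) (phi k)) * (dotv (phi k) theta - yk phi thstar k).

Definition state_dist (thstar theta vtheta : 'I_n -> R) : R :=
  Num.sqrt (\sum_(i < n) (theta i - thstar i) ^+ 2
            + \sum_(i < n) (vtheta i - thstar i) ^+ 2).

Definition is_solution (phi : 'I_N -> 'I_n -> R) (thstar : 'I_n -> R)
  (beta gamma mu t0 : R) (th vt : R -> 'I_n -> R) : Prop :=
  forall i : 'I_n,
    {within [set s | t0 <= s], continuous (fun s => th s i)} /\
    {within [set s | t0 <= s], continuous (fun s => vt s i)} /\
    (forall t, t0 < t ->
       is_derive t 1 (fun s => th s i) (- beta * (th t i - vt t i))) /\
    (forall t, t0 < t ->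
       is_derive t 1 (fun s => vt s i) (- gamma * Bvec phi thstar mu (th t) i)).

End Defs.

Definition class_Kinf (R : realType) (kappa : R -> R) : Prop :=
  {within [set x | 0 <= x], continuous kappa} /\
  kappa 0 = 0 /\
  (forall x y, 0 <= x -> x < y -> kappa x < kappa y) /\
  (forall M, exists x, 0 <= x /\ M <= kappa x).

Definition UGAS (R : realType) (n N : nat) (phi : 'I_N -> 'I_n -> R)
  (thstar : 'I_n -> R) (beta gamma mu : R) : Prop :=
  (exists kappa : R -> R, class_Kinf kappa /\
     forall (t0 : R) (th vt : R -> 'I_n -> R),
       is_solution phi thstar beta gamma mu t0 th vt ->
       forall t, t0 <= t ->
         state_dist thstar (th t) (vt t)
           <= kappa (state_dist thstar (th t0) (vt t0))) /\
  (forall r sigma : R, 0 < r -> 0 < sigma ->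
     exists T' : R, 0 < T' /\
       forall (t0 : R) (th vt : R -> 'I_n -> R),
         is_solution phi thstar beta gamma mu t0 th vt ->
         state_dist thstar (th t0) (vt t0) <= r ->
         forall t, t0 + T' <= t ->
           state_dist thstar (th t) (vt t) <= sigma).

From mathcomp Require Import all_boot all_order all_algebra.
From mathcomp Require Import all_classical all_reals all_analysis.
From mathcomp Require Import ring lra.
Set Implicit Arguments. Unset Strict Implicit. Unset Printing Implicit Defensive.
Import Order.TTheory GRing.Theory Num.Theory.
Import numFieldNormedType.Exports.
Local Open Scope classical_set_scope.
Local Open Scope ring_scope.

(* Write e = theta - theta^* and z = vartheta - theta, so that e' = beta z and
   z' = - gamma B - beta z, where B = sum_k w_k phi_k phi_k^T e with weights
   w_k = 1 / (1 + mu |phi_k|^2).  The rank condition makes the quadratic form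
   Q(e) = sum_k w_k (phi_k^T e)^2 positive definite.  For the Lyapunov function
   V = gamma Q(e) + beta |z|^2 + eps <e, z> the terms +-2 beta gamma <e, z>_w
   cancel in V', and for eps <= min (gamma m, beta) / 2 (m the coercivity constant
   of Q) one gets eps |(e, z)|^2 <= V <= b |(e, z)|^2 and V' <= - eps^2 |(e, z)|^2.
   Hence V (1 + (eps^2 / b) (t - t0)) is nonincreasing along solutions, which
   gives uniform stability and uniform attractivity, since (e, z) and
   (theta - theta^*, vartheta - theta^* ) have comparable norms. *)

Section Dot.
Variables (R : realType) (n : nat).
Implicit Types a b : 'I_n -> R.

Lemma dotvC a b : dotv a b = dotv b a.
Proof. by apply: eq_bigr => i _; rewrite mulrC. Qed.

Lemma dotvv_ge0 a : 0 <= dotv a a.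
Proof. by apply: sumr_ge0 => i _; rewrite -expr2 sqr_ge0. Qed.

Lemma dotvv_eq0 a : dotv a a = 0 -> forall i, a i = 0.
Proof.
move=> a0 i; apply/eqP; rewrite -sqrf_eq0 expr2; apply/eqP.
by apply: (psumr_eq0P _ a0) => // j _; rewrite -expr2 sqr_ge0.
Qed.

Lemma dotvZl a b c : dotv (fun i => c * a i) b = c * dotv a b.
Proof. by rewrite /dotv mulr_sumr; apply: eq_bigr => i _; rewrite mulrA. Qed.

Lemma dotvZr a b c : dotv a (fun i => c * b i) = c * dotv a b.
Proof. by rewrite dotvC dotvZl dotvC. Qed.

Lemma dotv_cross_le a b u v :
  2 * u * v * dotv a b <= u ^+ 2 * dotv a a + v ^+ 2 * dotv b b.
Proof.
rewrite -subr_ge0; have := dotvv_ge0 (fun i => u * a i - v * b i).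
suff -> : dotv (fun i => u * a i - v * b i) (fun i => u * a i - v * b i) =
  u ^+ 2 * dotv a a + v ^+ 2 * dotv b b - 2 * u * v * dotv a b by [].
rewrite /dotv !mulr_sumr -big_split -sumrB /=.
by apply: eq_bigr => i _; ring.
Qed.

Lemma dotv_sqr_le a b : dotv a b ^+ 2 <= dotv a a * dotv b b.
Proof.
have [b0|bpos] := eqVneq (dotv b b) 0.
  have -> : dotv a b = 0 by apply: big1 => i _; rewrite (dotvv_eq0 b0) mulr0.
  by rewrite b0 mulr0 expr2 mulr0.
have hB : 0 < dotv b b by rewrite lt_def bpos dotvv_ge0.
have := dotv_cross_le a b (dotv b b) (dotv a b).
rewrite !expr2 => h; rewrite -(ler_pM2r hB); lra.
Qed.

End Dot.

Section WeightedForm.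
Variables (R : realType) (n N : nat) (phi : 'I_N -> 'I_n -> R) (mu : R).
Hypothesis mu_ge0 : 0 <= mu.
Implicit Types a b x : 'I_n -> R.

Definition wgt (k : 'I_N) : R := (1 + mu * dotv (phi k) (phi k))^-1.

Definition wform a b : R := \sum_k wgt k * (dotv (phi k) a * dotv (phi k) b).

Lemma wformC a b : wform a b = wform b a.
Proof. by apply: eq_bigr => k _; rewrite [_ * dotv _ b]mulrC. Qed.

Lemma wformZr a b c : wform a (fun i => c * b i) = c * wform a b.
Proof.
rewrite /wform mulr_sumr; apply: eq_bigr => k _.
by rewrite dotvZr; ring.
Qed.

Lemma dotv_Bvec (thstar th x : 'I_n -> R) :
  dotv x (Bvec phi thstar mu th) = wform x (fun i => th i - thstar i).
Proof.
rewrite /dotv /Bvec /wform.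
under eq_bigr do rewrite mulr_sumr.
rewrite exchange_big /=; apply: eq_bigr => k _.
have -> : dotv (phi k) th - yk phi thstar k = dotv (phi k) (fun i => th i - thstar i).
  by rewrite /yk /dotv -sumrB; apply: eq_bigr => i _; rewrite mulrBr.
by rewrite /dotv mulr_suml mulr_sumr; apply: eq_bigr => i _; rewrite /wgt; ring.
Qed.

Lemma wgt_lbound (c : R) k :
  dotv (phi k) (phi k) <= c -> (1 + mu * c)^-1 <= wgt k.
Proof.
move=> hc; have h1 := ler_wpM2l mu_ge0 hc; have h2 := mulr_ge0 mu_ge0 (dotvv_ge0 (phi k)).
by rewrite lef_pV2 ?posrE; lra.
Qed.

Lemma wgt_gt0 k : 0 < wgt k.
Proof. by rewrite invr_gt0; have := mulr_ge0 mu_ge0 (dotvv_ge0 (phi k)); lra. Qed.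

Lemma wgt_le1 k : wgt k <= 1.
Proof. by have h := mulr_ge0 mu_ge0 (dotvv_ge0 (phi k)); rewrite /wgt invf_le1; lra. Qed.

Lemma wform_ubound x : wform x x <= (\sum_k dotv (phi k) (phi k)) * dotv x x.
Proof.
rewrite mulr_suml; apply: ler_sum => k _.
have := dotv_sqr_le (phi k) x; have := wgt_le1 k; have := wgt_gt0 k.
have := sqr_ge0 (dotv (phi k) x); rewrite !expr2; nra.
Qed.

Lemma sum_dotv_sqr_lbound : \rank (data_matrix phi) = n ->
  exists2 m, 0 < m & forall x, m * dotv x x <= \sum_k dotv (phi k) x ^+ 2.
Proof.
move=> rank_n.
have /row_freeP [P phiP] : row_free (data_matrix phi) by rewrite /row_free rank_n.
pose S := \sum_j dotv (fun k => P k j) (fun k => P k j).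
have S_ge0 : 0 <= S by apply: sumr_ge0 => j _; exact: dotvv_ge0.
exists (S + 1)^-1; first by rewrite invr_gt0; lra.
move=> x; pose y k := dotv (phi k) x.
(* [phi] has the right inverse [P], so x is recovered from its measurements y *)
have x_of_y j : x j = dotv y (fun k => P k j).
  have := congr1 (fun M : 'rV[R]_n => M 0 j) (congr1 (mulmx (\row_i x i)) phiP).
  rewrite mulmx1 mulmxA !mxE => <-; apply: eq_bigr => k _.
  by rewrite !mxE /y /dotv; congr (_ * _); apply: eq_bigr => i _; rewrite !mxE mulrC.
have xS : dotv x x <= dotv y y * S.
  rewrite /S mulr_sumr; apply: ler_sum => j _; rewrite x_of_y -expr2.
  exact: dotv_sqr_le.
have -> : \sum_k dotv (phi k) x ^+ 2 = dotv y y by apply: eq_bigr => k _; rewrite expr2.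
rewrite mulrC ler_pdivrMr; last by lra.
have := dotvv_ge0 y; nra.
Qed.

Lemma wform_lbound : \rank (data_matrix phi) = n ->
  exists2 m, 0 < m & forall x, m * dotv x x <= wform x x.
Proof.
move=> /sum_dotv_sqr_lbound [m m_gt0 hm].
pose C := \sum_k dotv (phi k) (phi k).
have C_ge0 : 0 <= C by apply: sumr_ge0 => k _; exact: dotvv_ge0.
have w0_gt0 : 0 < (1 + mu * C)^-1 by rewrite invr_gt0; have := mulr_ge0 mu_ge0 C_ge0; lra.
exists ((1 + mu * C)^-1 * m); first exact: mulr_gt0.
move=> x; rewrite -mulrA (le_trans (ler_wpM2l (ltW w0_gt0) (hm x))) //.
rewrite mulr_sumr; apply: ler_sum => k _; rewrite expr2.
apply: ler_wpM2r; first by rewrite -expr2 sqr_ge0.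
apply: wgt_lbound; rewrite /C (bigD1 k) //= lerDl.
by apply: sumr_ge0 => i _; exact: dotvv_ge0.
Qed.

End WeightedForm.

Section Continuity.
Variables (R : realType) (T : topologicalType) (n : nat).

Lemma continuous_sum m (h : 'I_m -> T -> R) :
  (forall i, continuous (h i)) -> continuous (fun x => \sum_(i < m) h i x).
Proof.
move=> hc; rewrite -fct_sumE; elim/big_ind: _ => //.
- by move=> x; exact: cst_continuous.
- by move=> f g cf cg x; exact: (continuousD (cf x) (cg x)).
Qed.

Lemma continuous_dotv (a b : T -> 'I_n -> R) :
  (forall i, continuous (fun x => a x i)) -> (forall i, continuous (fun x => b x i)) ->
  continuous (fun x => dotv (a x) (b x)).
Proof. by move=> ca cb; apply: continuous_sum => i x; exact: (continuousM (ca i x) (cb i x)). Qed.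

Lemma continuous_wform N (phi : 'I_N -> 'I_n -> R) mu (a b : T -> 'I_n -> R) :
  (forall i, continuous (fun x => a x i)) -> (forall i, continuous (fun x => b x i)) ->
  continuous (fun x => wform phi mu (a x) (b x)).
Proof.
move=> ca cb; apply: continuous_sum => k x.
have cphi i : continuous (fun _ : T => phi k i) by move=> y; exact: cst_continuous.
have ca' : continuous (fun y => dotv (phi k) (a y)) := continuous_dotv cphi ca.
have cb' : continuous (fun y => dotv (phi k) (b y)) := continuous_dotv cphi cb.
have cw : continuous (fun _ : T => wgt phi mu k) by move=> y; exact: cst_continuous.
exact: (continuousM (cw x) (continuousM (ca' x) (cb' x))).
Qed.

End Continuity.

Section Derivative.
Variables (R : realType) (n : nat) (t : R).

Lemma is_derive_dotv (a b : R -> 'I_n -> R) (da db : 'I_n -> R) :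
  (forall i, is_derive t 1 (fun s => a s i) (da i)) ->
  (forall i, is_derive t 1 (fun s => b s i) (db i)) ->
  is_derive t 1 (fun s => dotv (a s) (b s)) (dotv (a t) db + dotv da (b t)).
Proof.
move=> ha hb; have := is_derive_sum (fun i => is_deriveM (ha i) (hb i)).
rewrite fct_sumE => /is_derive_eq; apply.
by rewrite /dotv -big_split; apply: eq_bigr => i _ /=; congr (_ + _); exact: mulrC.
Qed.

Lemma is_derive_wform N (phi : 'I_N -> 'I_n -> R) mu (a b : R -> 'I_n -> R) (da db : 'I_n -> R) :
  (forall i, is_derive t 1 (fun s => a s i) (da i)) ->
  (forall i, is_derive t 1 (fun s => b s i) (db i)) ->
  is_derive t 1 (fun s => wform phi mu (a s) (b s))
    (wform phi mu (a t) db + wform phi mu da (b t)).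
Proof.
move=> ha hb.
have hphi k c dc : (forall i, is_derive t 1 (fun s => c s i) (dc i)) ->
    is_derive t 1 (fun s => dotv (phi k) (c s)) (dotv (phi k) dc).
  move=> hc; have := is_derive_dotv (a := fun _ => phi k) (fun i => is_derive_cst _ _ _) hc.
  by move/is_derive_eq; apply; rewrite addrC /dotv big1 ?add0r // => i _; rewrite mul0r.
have := is_derive_sum (fun k => is_deriveZ (wgt phi mu k) (is_deriveM (hphi k _ _ ha) (hphi k _ _ hb))).
rewrite fct_sumE => /is_derive_eq; apply.
by rewrite /wform -big_split; apply: eq_bigr => k _ /=; rewrite /GRing.scale /=; ring.
Qed.

End Derivative.

(* A linear factor suffices: [f (1 + c (t - t0))] has nonpositive derivative. *)
Lemma linear_decay (R : realType) (f df : R -> R) (t0 c : R) :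
  0 <= c -> {within [set s | t0 <= s], continuous f} ->
  (forall t, t0 < t -> is_derive t 1 f (df t)) ->
  (forall t, t0 < t -> df t <= - c * f t) -> (forall t, t0 <= t -> 0 <= f t) ->
  forall t, t0 <= t -> f t * (1 + c * (t - t0)) <= f t0.
Proof.
move=> c_ge0 cf hdf f_decay f_ge0 t ht.
pose l s := 1 + c * (s - t0).
have dg s : t0 < s -> is_derive s 1 (f \* l) (f s * c + l s * df s).
  move=> hs; have := is_deriveM (hdf s hs) (is_deriveD (is_derive_cst (1 : R) s 1)
    (is_deriveZ c (is_deriveB (is_derive_id s 1) (is_derive_cst t0 s 1)))).
  move/is_derive_eq; apply; rewrite !fctE /l; congr (_ + _ * _).
  by change (f s * (0 + c * (1 - 0)) = f s * c); ring.
have -> : f t0 = (f \* l) t0 by rewrite /= /l subrr mulr0 addr0 mulr1.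
apply: (@ler0_derive1_nincry _ (f \* l) t0) => // [x|x|].
- by rewrite in_itv /= andbT => hx; have dgx := dg x hx; exact: ex_derive.
- rewrite in_itv /= andbT => hx; have dgx := dg x hx; rewrite derive1E derive_val.
  have cd_ge0 : 0 <= c * (x - t0) by apply: mulr_ge0 => //; lra.
  have := mulr_ge0 (mulr_ge0 cd_ge0 c_ge0) (f_ge0 x (ltW hx)).
  have : l x * df x <= l x * (- c * f x).
    by apply: ler_wpM2l; [rewrite /l; lra | exact: f_decay].
  rewrite /l; lra.
- have cl : continuous l.
    move=> s; apply: cvgD; first exact: cvg_cst.
    by apply: cvgMl_tmp; apply: cvgB; [exact: cvg_id | exact: cvg_cst].
  have -> : [set` `[t0, +oo[%R] = [set s | t0 <= s].
    by apply/seteqP; split => x /=; rewrite in_itv /= andbT.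
  have cl' : {within [set s | t0 <= s], continuous l} := continuous_subspaceT cl.
  by move=> x; exact: (continuousM (cf x) (cl' x)).
Qed.

Section Lyapunov.
Variables (R : realType) (n N : nat) (phi : 'I_N -> 'I_n -> R) (mu beta gamma eps : R).
Implicit Types e z : 'I_n -> R.

(* The cross term [eps <e, z>] is what makes V decrease in the direction of e. *)
Definition lyap e z : R :=
  gamma * wform phi mu e e + beta * dotv z z + eps * dotv e z.

Definition lyap_rate e z : R :=
  - (2 * beta ^+ 2) * dotv z z
  + eps * (beta * dotv z z - gamma * wform phi mu e e - beta * dotv e z).

End Lyapunov.

Section Solution.
Variables (R : realType) (n N : nat) (phi : 'I_N -> 'I_n -> R) (thstar : 'I_n -> R).
Variables (beta gamma mu t0 : R) (th vt : R -> 'I_n -> R).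
Hypothesis sol : is_solution phi thstar beta gamma mu t0 th vt.

Definition err s := fun i => th s i - thstar i.
Definition gap s := fun i => vt s i - th s i.

Lemma is_derive_err t i : t0 < t -> is_derive t 1 (fun s => err s i) (beta * gap t i).
Proof.
move=> ht; have [_ [_ [dth _]]] := sol i.
have := is_deriveB (dth t ht) (is_derive_cst (thstar i) t 1).
by move/is_derive_eq; apply; rewrite /gap subr0; ring.
Qed.

Lemma is_derive_gap t i : t0 < t ->
  is_derive t 1 (fun s => gap s i) (- gamma * Bvec phi thstar mu (th t) i - beta * gap t i).
Proof.
move=> ht; have [_ [_ [dth dvt]]] := sol i.
have := is_deriveB (dvt t ht) (dth t ht).
by move/is_derive_eq; apply; rewrite /gap; ring.
Qed.

Lemma is_derive_lyap eps t : t0 < t ->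
  is_derive t 1 (fun s => lyap phi mu beta gamma eps (err s) (gap s))
    (lyap_rate phi mu beta gamma eps (err t) (gap t)).
Proof.
move=> ht; have de i := is_derive_err i ht; have dz i := is_derive_gap i ht.
have := is_deriveD (is_deriveD (is_deriveZ gamma (is_derive_wform phi mu de de))
  (is_deriveZ beta (is_derive_dotv dz dz))) (is_deriveZ eps (is_derive_dotv de dz)).
move/is_derive_eq; apply.
(* the contributions 2 beta gamma wform e z of both gamma Q(e) and beta |z|^2 cancel *)
have dot_dz u : dotv u (fun i => - gamma * Bvec phi thstar mu (th t) i - beta * gap t i) =
    - gamma * wform phi mu u (err t) - beta * dotv u (gap t).
  rewrite -dotv_Bvec /dotv !mulr_sumr -sumrB; apply: eq_bigr => i _; ring.
rewrite /lyap_rate [dotv (fun i => _) (gap t)]dotvC !dot_dz.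
rewrite (wformC phi mu (fun i => beta * gap t i)) !wformZr dotvZl.
rewrite (wformC phi mu (gap t)) /GRing.scale /=; ring.
Qed.

Lemma within_continuous_lyap eps :
  {within [set s | t0 <= s], continuous (fun s => lyap phi mu beta gamma eps (err s) (gap s))}.
Proof.
pose A := [set s : R | t0 <= s].
have cst_c (c : R) : {within A, continuous (fun _ => c)} by move=> y; exact: cst_continuous.
have ce i : {within A, continuous (fun s => err s i)}.
  by have [cth _] := sol i; move=> x; exact: (continuousB (cth x) (cst_c _ x)).
have cz i : {within A, continuous (fun s => gap s i)}.
  by have [cth [cvt _]] := sol i; move=> x; exact: (continuousB (cvt x) (cth x)).
have cQ : {within A, continuous (fun s => wform phi mu (err s) (err s))} :=
  continuous_wform ce ce.
have cZ : {within A, continuous (fun s => dotv (gap s) (gap s))} := continuous_dotv cz cz.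
have cP : {within A, continuous (fun s => dotv (err s) (gap s))} := continuous_dotv ce cz.
move=> x; exact: (continuousD (continuousD (continuousM (cst_c gamma x) (cQ x))
  (continuousM (cst_c beta x) (cZ x))) (continuousM (cst_c eps x) (cP x))).
Qed.

End Solution.

Section StateDistance.
Variables (R : realType) (n : nat) (c x y : 'I_n -> R).
Let e := fun i => x i - c i.
Let z := fun i => y i - x i.

Let sqr_state_dist : state_dist c x y ^+ 2 = 2 * dotv e e + 2 * dotv e z + dotv z z.
Proof.
rewrite sqr_sqrtr; last by apply: addr_ge0; apply: sumr_ge0 => i _; exact: sqr_ge0.
by rewrite /dotv !mulr_sumr -!big_split /=; apply: eq_bigr => i _; rewrite /e /z; ring.
Qed.

Lemma sqr_state_dist_le : state_dist c x y ^+ 2 <= 3 * (dotv e e + dotv z z).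
Proof.
have := dotv_cross_le e z 1 1; rewrite sqr_state_dist expr1n !mul1r mulr1.
have := dotvv_ge0 z; lra.
Qed.

Lemma sqr_state_dist_ge : dotv e e + dotv z z <= 3 * state_dist c x y ^+ 2.
Proof.
(* from 0 <= |3 e + 2 z|^2 *)
have := dotv_cross_le e z 3 (-2); rewrite sqr_state_dist sqrrN.
have := dotvv_ge0 e; have := dotvv_ge0 z; rewrite !expr2; lra.
Qed.

End StateDistance.

Section LyapunovBounds.
Variables (R : realType) (n N : nat) (phi : 'I_N -> 'I_n -> R) (mu beta gamma eps m C : R).
Hypotheses (beta_gt0 : 0 < beta) (gamma_gt0 : 0 < gamma) (eps_gt0 : 0 < eps).
Hypotheses (eps_le_m : 2 * eps <= gamma * m) (eps_le_beta : 2 * eps <= beta).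
Hypotheses (C_ge0 : 0 <= C).
Hypotheses (wform_lb : forall x, m * dotv x x <= wform phi mu x x).
Hypotheses (wform_ub : forall x, wform phi mu x x <= C * dotv x x).

Local Notation V := (lyap phi mu beta gamma eps).

Let gammaQ_lb e : gamma * m * dotv e e <= gamma * wform phi mu e e.
Proof. by rewrite -mulrA ler_wpM2l // ltW. Qed.

Lemma lyap_lbound e z : eps * (dotv e e + dotv z z) <= V e z.
Proof.
have hP := dotv_cross_le e z 1 (-1); rewrite sqrrN expr1n !mul1r in hP.
have := ler_wpM2l (ltW eps_gt0) hP; have := gammaQ_lb e.
have := ler_wpM2r (dotvv_ge0 e) eps_le_m; have := ler_wpM2r (dotvv_ge0 z) eps_le_beta.
have := mulr_ge0 (ltW eps_gt0) (dotvv_ge0 e); have := mulr_ge0 (ltW eps_gt0) (dotvv_ge0 z).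
rewrite /lyap; lra.
Qed.

Lemma lyap_ubound e z : V e z <= (gamma * C + 2 * beta) * (dotv e e + dotv z z).
Proof.
have hP := dotv_cross_le e z 1 1; rewrite expr1n !mul1r mulr1 in hP.
have := ler_wpM2l (ltW eps_gt0) hP; have := ler_wpM2l (ltW gamma_gt0) (wform_ub e).
have := ler_wpM2r (dotvv_ge0 e) eps_le_beta; have := ler_wpM2r (dotvv_ge0 z) eps_le_beta.
have := mulr_ge0 (mulr_ge0 (ltW gamma_gt0) C_ge0) (dotvv_ge0 z).
have := mulr_ge0 (ltW beta_gt0) (dotvv_ge0 e); have := mulr_ge0 (ltW beta_gt0) (dotvv_ge0 z).
rewrite /lyap; lra.
Qed.

Let rate_bound (p E Z P q : R) : 2 * eps <= p -> 0 <= E -> 0 <= Z -> p * E <= q ->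
  2 * p * - beta * P <= p ^+ 2 * E + beta ^+ 2 * Z ->
  - (2 * beta ^+ 2) * Z + eps * (beta * Z - q - beta * P) <= - eps ^+ 2 * (E + Z).
Proof.
move=> eps_le_p E_ge0 Z_ge0 hq young.
(* [lra] and [nra] ignore section hypotheses, so bring them into the context *)
have e0 := eps_gt0; have b0 := beta_gt0; have eb := eps_le_beta.
have p_gt0 : 0 < p by lra.
rewrite -(ler_pM2l (_ : 0 < 2 * p)); last by lra.
have h1 : 2 * p * eps * beta * Z <= p * beta ^+ 2 * Z.
  by rewrite expr2; have := mulr_ge0 (mulr_ge0 (ltW p_gt0) (ltW beta_gt0)) Z_ge0; nra.
have h2 : eps * beta ^+ 2 * Z <= p * beta ^+ 2 * Z / 2.
  by have := mulr_ge0 (sqr_ge0 beta) Z_ge0; nra.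
have h3 : 2 * p * eps ^+ 2 * Z <= p * beta ^+ 2 * Z / 2.
  by rewrite !expr2; have := mulr_ge0 (ltW p_gt0) Z_ge0; nra.
have h4 : 2 * p * eps ^+ 2 * E <= eps * p ^+ 2 * E.
  by rewrite !expr2; have := mulr_ge0 (mulr_ge0 (ltW eps_gt0) (ltW p_gt0)) E_ge0; nra.
have h5 : 2 * p * eps * (p * E) <= 2 * p * eps * q.
  by apply: ler_wpM2l => //; have := mulr_gt0 p_gt0 eps_gt0; lra.
have h6 := ler_wpM2l (ltW eps_gt0) young.
have := mulr_ge0 (ltW p_gt0) (mulr_ge0 (sqr_ge0 beta) Z_ge0).
lra.
Qed.

Lemma lyap_rate_le e z : lyap_rate phi mu beta gamma eps e z <= - eps ^+ 2 * (dotv e e + dotv z z).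
Proof.
have young := dotv_cross_le e z (gamma * m) (- beta); rewrite sqrrN in young.
exact: rate_bound eps_le_m (dotvv_ge0 e) (dotvv_ge0 z) (gammaQ_lb e) young.
Qed.

Section Decay.
Variables (thstar : 'I_n -> R) (t0 : R) (th vt : R -> 'I_n -> R).
Hypothesis sol : is_solution phi thstar beta gamma mu t0 th vt.

Let b := gamma * C + 2 * beta.
Let lam := eps ^+ 2 / b.
Let S s := dotv (err thstar th s) (err thstar th s) + dotv (gap th vt s) (gap th vt s).

Let b_gt0 : 0 < b.
Proof. by have := mulr_ge0 (ltW gamma_gt0) C_ge0; have := beta_gt0; rewrite /b; lra. Qed.

Let S_ge0 s : 0 <= S s.
Proof. by apply: addr_ge0; exact: dotvv_ge0. Qed.

Lemma lyap_decay t : t0 <= t ->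
  V (err thstar th t) (gap th vt t) * (1 + lam * (t - t0))
    <= V (err thstar th t0) (gap th vt t0).
Proof.
apply: (linear_decay (df := fun s => lyap_rate phi mu beta gamma eps (err thstar th s) (gap th vt s))
  _ (within_continuous_lyap (eps := eps) sol) (is_derive_lyap sol eps)).
- by rewrite /lam divr_ge0 // ?sqr_ge0 // ltW.
- move=> s _; apply: le_trans (lyap_rate_le _ _) _.
  rewrite /lam !mulNr lerN2 -mulrA; apply: ler_wpM2l; first exact: sqr_ge0.
  by rewrite ler_pdivrMl // -/(S s); exact: lyap_ubound.
- move=> s _; apply: le_trans (lyap_lbound _ _).
  exact: mulr_ge0 (ltW eps_gt0) (S_ge0 s).
Qed.

Lemma sqr_state_dist_decay t : t0 <= t ->
  state_dist thstar (th t) (vt t) ^+ 2 * (1 + lam * (t - t0))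
    <= 9 * b / eps * state_dist thstar (th t0) (vt t0) ^+ 2.
Proof.
move=> ht; have L_ge0 : 0 <= 1 + lam * (t - t0).
  have : 0 <= lam * (t - t0).
    by apply: mulr_ge0; [exact: divr_ge0 (sqr_ge0 eps) (ltW b_gt0) | rewrite subr_ge0].
  lra.
have Dt : state_dist thstar (th t) (vt t) ^+ 2 <= 3 * S t := sqr_state_dist_le _ _ _.
have D0 : S t0 <= 3 * state_dist thstar (th t0) (vt t0) ^+ 2 := sqr_state_dist_ge _ _ _.
rewrite [X in _ <= X]mulrAC ler_pdivlMr //.
have := ler_wpM2l (ltW eps_gt0) (ler_wpM2r L_ge0 Dt).
have := ler_wpM2r L_ge0 (lyap_lbound (err thstar th t) (gap th vt t)).
have := ler_wpM2l (ltW b_gt0) D0; have := lyap_ubound (err thstar th t0) (gap th vt t0).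
have := lyap_decay ht; rewrite -/b -/(S t) -/(S t0); lra.
Qed.

End Decay.

End LyapunovBounds.

Lemma class_Kinf_scale (R : realType) (k : R) : 0 < k -> class_Kinf (fun r => k * r).
Proof.
move=> k_gt0; split; first by apply: continuous_subspaceT => x; exact: mulrl_continuous.
split; first by rewrite mulr0.
split; first by move=> x y _ xy; rewrite ltr_pM2l.
move=> M; exists (`|M| / k); split; first exact: divr_ge0 (normr_ge0 M) (ltW k_gt0).
by rewrite mulrC divfK ?gt_eqF ?ler_norm.
Qed.

Lemma UGAS_of_sqr_dist_decay (R : realType) (n N : nat) (phi : 'I_N -> 'I_n -> R)
    (thstar : 'I_n -> R) (beta gamma mu K lam : R) : 0 < lam ->
  (forall t0 th vt, is_solution phi thstar beta gamma mu t0 th vt -> forall t, t0 <= t ->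
    state_dist thstar (th t) (vt t) ^+ 2 * (1 + lam * (t - t0))
      <= K * state_dist thstar (th t0) (vt t0) ^+ 2) ->
  UGAS phi thstar beta gamma mu.
Proof.
move=> lam_gt0 decay; set k := `|K| + 1.
have k_gt0 : 0 < k by rewrite /k ltr_pwDr.
have K_le : K <= k ^+ 2 by have := ler_norm K; rewrite /k expr2; nra.
have dist_ge0 c x y : 0 <= state_dist c x y := sqrtr_ge0 _.
have sqr_dist_le t0 th vt t : is_solution phi thstar beta gamma mu t0 th vt -> t0 <= t ->
    state_dist thstar (th t) (vt t) ^+ 2 * (1 + lam * (t - t0))
      <= k ^+ 2 * state_dist thstar (th t0) (vt t0) ^+ 2.
  move=> sol ht; apply: le_trans (decay _ _ _ sol t ht) _.
  by apply: ler_wpM2r K_le; exact: sqr_ge0.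
split.
  exists (fun r => k * r); split; first exact: class_Kinf_scale.
  move=> t0 th vt sol t ht; rewrite -ler_sqr ?nnegrE ?mulr_ge0 ?dist_ge0 ?(ltW k_gt0) //.
  rewrite exprMn; apply: le_trans (sqr_dist_le _ _ _ _ sol ht).
  rewrite ler_peMr ?sqr_ge0 // lerDl; apply: mulr_ge0; [exact: ltW | by rewrite subr_ge0].
move=> r sigma r_gt0 sigma_gt0.
pose T := k ^+ 2 * r ^+ 2 / (lam * sigma ^+ 2).
have T_ge0 : 0 <= T.
  exact: divr_ge0 (mulr_ge0 (sqr_ge0 k) (sqr_ge0 r)) (mulr_ge0 (ltW lam_gt0) (sqr_ge0 sigma)).
exists (T + 1); split; first by lra.
move=> t0 th vt sol d0_le t hT; have ht : t0 <= t by lra.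
rewrite -ler_sqr ?nnegrE ?dist_ge0 ?(ltW sigma_gt0) //.
have c_gt0 : 0 < k ^+ 2 * r ^+ 2 / sigma ^+ 2 by rewrite divr_gt0 ?mulr_gt0 ?exprn_gt0.
have c_le : k ^+ 2 * r ^+ 2 / sigma ^+ 2 <= 1 + lam * (t - t0).
  have -> : k ^+ 2 * r ^+ 2 / sigma ^+ 2 = lam * T by rewrite /T; field; rewrite !gt_eqF ?exprn_gt0.
  have : lam * (T + 1) <= lam * (t - t0) by rewrite ler_pM2l //; lra.
  by have := lam_gt0; lra.
have d0_sqr : state_dist thstar (th t0) (vt t0) ^+ 2 <= r ^+ 2.
  by rewrite ler_sqr ?nnegrE ?dist_ge0 ?(ltW r_gt0).
rewrite -(ler_pM2r c_gt0) [sigma ^+ 2 * _]mulrC divfK ?gt_eqF ?exprn_gt0 //.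
apply: le_trans (ler_wpM2l (sqr_ge0 _) c_le) _.
apply: le_trans (sqr_dist_le _ _ _ _ sol ht) _.
by apply: ler_wpM2l d0_sqr; exact: sqr_ge0.
Qed.

Theorem theorem5 (R : realType) (n N : nat)
  (thstar : 'I_n -> R) (phi : 'I_N -> 'I_n -> R)
  (hrank : \rank (data_matrix phi) = n)
  (beta gamma mu : R) (hbeta : 0 < beta) (hgamma : 0 < gamma) (hmu : 0 <= mu) :
  UGAS phi thstar beta gamma mu.
Proof.
have [m m_gt0 wform_lb] := wform_lbound hmu hrank.
have wform_ub := wform_ubound phi hmu.
have C_ge0 : 0 <= \sum_k dotv (phi k) (phi k) by apply: sumr_ge0 => k _; exact: dotvv_ge0.
pose eps := Num.min (gamma * m) beta / 2.
have eps_gt0 : 0 < eps by rewrite divr_gt0 // lt_min mulr_gt0 ?hbeta.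
have eps_le_m : 2 * eps <= gamma * m by rewrite /eps mulrC divfK // ge_min lexx.
have eps_le_beta : 2 * eps <= beta by rewrite /eps mulrC divfK // ge_min lexx orbT.
apply: (UGAS_of_sqr_dist_decay _ (fun t0 th vt sol t ht => sqr_state_dist_decay
  hbeta hgamma eps_gt0 eps_le_m eps_le_beta C_ge0 wform_lb wform_ub sol ht)).
by rewrite divr_gt0 ?exprn_gt0 //; have := mulr_ge0 (ltW hgamma) C_ge0; lra.
Qed.
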